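(* Let $N\in\mathbb N$, let $\{\pi_n\in\Pi\}_{n=1}^N$ be policies chosen by a learner in the online protocol described in the context, and let $\{w_n>0\}_{n=1}^N$ be weights, $w_{1:N}=\sum_{n=1}^N w_n$. Then $$\mathbb E\Big[\sum_{n=1}^{N}\frac{w_n J(\pi_n)}{w_{1:N}}\Big]\le J(\pi^* )+C_{\pi^*}\Big(\epsilon_\Pi^w+\mathbb E\Big[\frac{\mathrm{regret}^w(\Pi)}{w_{1:N}}\Big]\Big),$$ where $\mathrm{regret}^w(\Pi)=\max_{\pi\in\Pi}\sum_{n=1}^N\big(w_n\tilde f_n(\pi_n)-w_n\tilde f_n(\pi)\big)$ and the expectation is over the sampling of the $\tilde f_n$.
   Context: Imitation learning setting. $\Pi$ is a compact convex subset of a normed space with norm $\|\cdot\|$ (dual norm $\|\cdot\|_*$); its elements are (parameters of) policies. Each policy $\pi$ has an expected cost $J(\pi)\in\mathbb R$ and induces a distribution $d_\pi$ over state–time pairs $(s,t)$; $\pi_s$ is the action distribution of $\pi$ at state $s$. There is a fixed expert policy $\pi^*$, a nonnegative function $D(\pi^*_s\|\pi_s)$ and a constant $C_{\pi^*}\ge 0$ such that $J(\pi)-J(\pi^* )\le C_{\pi^*}\,\mathbb E_{(s,t)\sim d_\pi}[D(\pi^*_s\|\pi_s)]$ for all $\pi\in\Pi$. Define $F(\pi',\pi)=\mathbb E_{(s,t)\sim d_{\pi'}}[D(\pi^*_s\|\pi_s)]$. Online protocol: in round $n$ the learner picks $\pi_n$ based only on information from rounds $1,\dots,n-1$; then the per-round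 cost $f_n(\pi)=F(\pi_n,\pi)$ is defined and a random function $\tilde f_n$ is sampled which is an unbiased estimate of $f_n$ given $\pi_n$ (i.e. $\mathbb E[\tilde f_n(\pi)\mid \text{past},\pi_n]=f_n(\pi)$ for all $\pi$). The constant $\epsilon_\Pi^w$ is such that for all $N\in\mathbb N$ and all weights $\{\theta_n>0\}_{n=1}^N$ with $\sum_n\theta_n=1$: $\mathbb E\big[\max_{\{\pi_n\in\Pi\}}\min_{\pi\in\Pi}\sum_{n=1}^N\theta_n\tilde f_n(\pi)\big]\le\epsilon_\Pi^w$. *)

From HB Require Import structures.
From mathcomp Require Import all_boot all_order all_algebra.
From mathcomp Require Import all_classical all_reals all_analysis.
From mathcomp Require Import measurable_realfun.
Set Implicit Arguments. Unset Strict Implicit. Unset Printing Implicit Defensive.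
Import Order.TTheory GRing.Theory Num.Theory.
Import numFieldNormedType.Exports.
Local Open Scope classical_set_scope.
Local Open Scope ring_scope.

Definition convex_subset (R : realType) (V : normedModType R) (A : set V) :=
  forall x y, A x -> A y -> forall t : R, 0 <= t <= 1 -> A (t *: x + (1 - t) *: y).

Definition is_filtration d (Omega : measurableType d) (G : nat -> set (set Omega)) :=
  [/\ (forall n, sigma_algebra setT (G n)),
      (forall n A, G n A -> measurable A) &
      (forall n m, (n <= m)%N -> G n `<=` G m)].

(** G-measurability of real-, extended-real- and policy-valued maps
    (policy space carries its Borel structure: preimages of open sets). *)
Definition Gmeas_R d (Omega : measurableType d) (R : realType)
  (G : set (set Omega)) (f : Omega -> R) :=
  forall B : set R, measurable B -> G (f @^-1` B).

Definition Gmeas_eR d (Omega : measurableType d) (R : realType)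
  (G : set (set Omega)) (f : Omega -> \bar R) :=
  forall B : set (\bar R), measurable B -> G (f @^-1` B).

Definition Gmeas_V d (Omega : measurableType d) (R : realType) (V : normedModType R)
  (G : set (set Omega)) (f : Omega -> V) :=
  forall U : set V, open U -> G (f @^-1` U).

Definition is_cond_exp d (Omega : measurableType d) (R : realType)
  (P : probability Omega R) (G : set (set Omega)) (X Y : Omega -> \bar R) :=
  Gmeas_eR G Y /\
  forall A, G A -> (\int[P]_(x in A) X x = \int[P]_(x in A) Y x)%E.

(** F(pi', pi) = E_{(s,t) ~ d_{pi'}} [ D(pi*_s || pi_s) ], where
    Dfun pi (s,t) = D(pi*_s || pi_s) (the expert pi* is fixed). *)
Definition Fcost dS (S : measurableType dS) (R : realType) (V : normedModType R)
  (dist : V -> probability S R) (Dfun : V -> S -> R) (pi' pi : V) : \bar R :=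
  (\int[dist pi']_x (Dfun pi x)%:E)%E.

(** Inner quantity of epsilon_Pi^w for horizon M and weights theta:
    max over sequences {pi_n in Pi} of min over pi in Pi of
    sum_n theta_n ftilde_n(pi), where ftilde_n is the estimate sampled when
    the learner plays pi_n (ft n w pi_n pi). Max/min are sup/inf. *)
Definition eps_inner d (Omega : measurableType d) (R : realType) (V : normedModType R)
  (Pol : set V) (ft : nat -> Omega -> V -> V -> R) (M : nat) (theta : nat -> R)
  (w : Omega) : \bar R :=
  ereal_sup [set ereal_inf [set (\sum_(n < M) theta n * ft n w (s n) p)%:E | p in Pol]
            | s in [set s : nat -> V | forall n, (n < M)%N -> Pol (s n)]].

(** Weighted regret regret^w(Pi) = max_{pi in Pi} sum_n (w_n ftilde_n(pi_n) - w_n ftilde_n(pi)),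
    with ftilde_n(.) = ft n omega (pi_n omega) (.). *)
Definition wregret d (Omega : measurableType d) (R : realType) (V : normedModType R)
  (Pol : set V) (ft : nat -> Omega -> V -> V -> R) (pi : nat -> Omega -> V)
  (N : nat) (wt : nat -> R) (w : Omega) : \bar R :=
  ereal_sup [set (\sum_(n < N) (wt n * ft n w (pi n w) (pi n w)
                                - wt n * ft n w (pi n w) p))%:E | p in Pol].

From HB Require Import structures.
From mathcomp Require Import all_boot all_order all_algebra.
From mathcomp Require Import all_classical all_reals all_analysis.
From mathcomp Require Import measurable_realfun.
Set Implicit Arguments. Unset Strict Implicit. Unset Printing Implicit Defensive.
Import Order.TTheory GRing.Theory Num.Theory.
Import numFieldNormedType.Exports.
Local Open Scope classical_set_scope.
Local Open Scope ring_scope.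

(* Normalise the weights to th_n = w_n / w_{1:N}.  In each round, the bound
   J(pi_n) - J* <= C F(pi_n, pi_n) and the unbiasedness of the estimate given
   the past (pi_n is G_n-measurable) give E J(pi_n) <= J* + C E ftilde_n(pi_n);
   averaging with the th_n yields
   E sum_n th_n J(pi_n) <= J* + C E sum_n th_n ftilde_n(pi_n).
   Pointwise, sum_n th_n ftilde_n(pi_n) is at most
   min_pi sum_n th_n ftilde_n(pi) + regret^w / w_{1:N}, and the minimum is at
   most the random variable inside epsilon_Pi^w, whose expectation is at most
   epsilon_Pi^w. *)

Section integral_bounds.
Context d (T : measurableType d) (R : realType).
Variable mu : {measure set T -> \bar R}.
Local Open Scope ereal_scope.

Lemma le_integral_measurable (D : set T) (f g : T -> \bar R) : measurable D ->
  measurable_fun D f -> measurable_fun D g -> {in D, forall x, f x <= g x} ->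
  \int[mu]_(x in D) f x <= \int[mu]_(x in D) g x.
Proof.
move=> mD mf mg fg; rewrite integralE [leRHS]integralE leeB//.
- apply: ge0_le_integral => //; [exact: measurable_funepos..|].
  by move=> x /mem_set; exact: funepos_le.
- apply: ge0_le_integral => //; [exact: measurable_funeneg..|].
  by move=> x /mem_set; exact: funeneg_le.
Qed.

Lemma integrable_of_lb (f h : T -> \bar R) :
  measurable_fun setT f -> mu.-integrable setT h -> (forall x, h x <= f x) ->
  \int[mu]_x f x < +oo -> mu.-integrable setT f.
Proof.
move=> mf ih hf flt; apply/integrableP; split => //.
have mh : measurable_fun setT h by case/integrableP: ih.
have neg_fin : \int[mu]_x f^\- x \is a fin_num.
  rewrite ge0_fin_numE; last by apply: integral_ge0 => x _; exact: funeneg_ge0.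
  apply: le_lt_trans (integral_funeneg_lt_pinfty measurableT ih).
  apply: ge0_le_integral => //; [exact: measurable_funeneg..|].
  by move=> x _; apply: funeneg_le (in_setT x) => y _; exact: hf.
rewrite -[fun x => _]/(abse \o f) fune_abse ge0_integralD //;
  [|exact: measurable_funepos|exact: measurable_funeneg].
rewrite lte_add_pinfty //; last by rewrite -ge0_fin_numE ?integral_ge0.
move: flt; rewrite integralE !ltey; apply: contra => /eqP ->.
by rewrite -(fineK neg_fin).
Qed.

Lemma integral_le_add_of_subr_le (a r e h : T -> \bar R) (eps : R) :
  mu.-integrable setT a -> mu.-integrable setT h ->
  measurable_fun setT r -> measurable_fun setT e ->
  (forall x, h x <= r x) -> (forall x, a x - r x <= e x) ->
  \int[mu]_x e x <= eps%:E -> \int[mu]_x a x <= eps%:E + \int[mu]_x r x.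
Proof.
move=> ia ih mr me hr are eeps.
have [->|r_fin] := eqVneq (\int[mu]_x r x) +oo; first by rewrite addey ?leey.
have ir : mu.-integrable setT r by apply: (integrable_of_lb mr ih hr); rewrite ltey.
rewrite -leeBlDr ?(integrable_fin_num measurableT) // -integralB //.
apply: le_trans eeps; apply: le_integral_measurable => //.
exact: measurable_int (integrableB measurableT ia ir).
Qed.

Section weighted_sum.
Variables (N : nat) (th : nat -> R) (g : nat -> T -> R).
Hypothesis ig : forall n, (n < N)%N -> mu.-integrable setT (EFin \o g n).

Let wsumE : (fun x => (\sum_(n < N) th n * g n x)%:E) =
            (fun x => \sum_(n < N) (th n)%:E * (g n x)%:E).
Proof. by apply: funext => x; rewrite -sumEFin; under eq_bigr do rewrite EFinM. Qed.

Lemma integrable_wsum :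
  mu.-integrable setT (fun x => (\sum_(n < N) th n * g n x)%:E).
Proof. by rewrite wsumE; apply: integrable_sum => // n _; exact/integrableZl/ig. Qed.

Lemma integral_wsum : \int[mu]_x (\sum_(n < N) th n * g n x)%:E =
  (\sum_(n < N) th n * fine (\int[mu]_x (g n x)%:E))%:E.
Proof.
rewrite wsumE integral_sum //; last by move=> n; exact/integrableZl/ig.
rewrite -sumEFin; apply: eq_bigr => n _.
by rewrite integralZl ?ig // EFinM fineK // integrable_fin_num ?ig.
Qed.

End weighted_sum.

End integral_bounds.

Lemma probability_integral_le_affine d (T : measurableType d) (R : realType)
    (P : probability T R) (j : T -> R) (Y : T -> \bar R) (c C : R) :
  0 <= C -> P.-integrable setT (EFin \o j) ->
  measurable_fun setT Y -> (forall x, (0 <= Y x)%E) ->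
  (forall x, ((j x - c)%:E <= C%:E * Y x)%E) ->
  (\int[P]_x (j x)%:E <= c%:E + C%:E * \int[P]_x Y x)%E.
Proof.
move=> C_ge0 ij mY Y_ge0 jY.
have ic := finite_measure_integrable_cst P c measurableT.
have int_shift : (\int[P]_x ((j x)%:E - c%:E) = \int[P]_x (j x)%:E - c%:E)%E.
  rewrite integralB // integral_cst //; congr (_ - _)%E.
  by rewrite -[RHS]mule1; congr (_ * _)%E; exact: probability_setT.
have : (\int[P]_x ((j x)%:E - c%:E) <= C%:E * \int[P]_x Y x)%E.
  rewrite -ge0_integralZl_EFin //.
  apply: le_integral_measurable => //; last by move=> x _; rewrite -EFinB jY.
  - exact: measurable_int (integrableB measurableT ij ic).
  - exact: measurable_funeM.
by rewrite int_shift leeBlDl.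
Qed.

Lemma wavg_le_affine (R : numDomainType) (N : nat) (th a b : nat -> R) (c C : R) :
  (forall n, (n < N)%N -> 0 <= th n) -> \sum_(n < N) th n = 1 ->
  (forall n, (n < N)%N -> a n <= c + C * b n) ->
  \sum_(n < N) th n * a n <= c + C * \sum_(n < N) th n * b n.
Proof.
move=> th_ge0 th1 ab.
apply: (@le_trans _ _ (\sum_(n < N) th n * (c + C * b n))).
  by apply: ler_sum => n _; rewrite ler_wpM2l ?th_ge0 ?ab.
rewrite mulr_sumr -[X in X + _]mulr1 -th1 mulr_sumr -big_split /=.
by apply/ler_sum => n _; rewrite mulrDr mulrCA [c * _]mulrC.
Qed.

Lemma sumr_ord_gt0 (R : numDomainType) (N : nat) (F : nat -> R) :
  (0 < N)%N -> (forall n, (n < N)%N -> 0 < F n) -> 0 < \sum_(n < N) F n.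
Proof.
move=> N_gt0 F_gt0; rewrite -(big_mkord xpredT).
have := ltr_sum_nat (F := fun=> 0) N_gt0 (fun n hn => F_gt0 n (andP hn).2).
by rewrite big1.
Qed.

Section regret_decomposition.
Variables (R : realType) (V : normedModType R) (Pol : set V).
Variables (d : measure_display) (Omega : measurableType d).
Variables (ft : nat -> Omega -> V -> V -> R) (pi : nat -> Omega -> V).
Variables (N : nat) (wt : nat -> R) (W : R).
Hypothesis W_gt0 : 0 < W.

Lemma wavg_subr_le_wregret w p : Pol p ->
  ((\sum_(n < N) wt n / W * ft n w (pi n w) (pi n w)
     - \sum_(n < N) wt n / W * ft n w (pi n w) p)%:E
   <= wregret Pol ft pi N wt w * (W^-1)%:E)%E.
Proof.
move=> Pp; have -> : \sum_(n < N) wt n / W * ft n w (pi n w) (pi n w)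
    - \sum_(n < N) wt n / W * ft n w (pi n w) p =
    (\sum_(n < N) (wt n * ft n w (pi n w) (pi n w) - wt n * ft n w (pi n w) p)) / W.
  by rewrite -sumrB mulr_suml; apply: eq_bigr => n _; rewrite -!mulrBr mulrAC.
rewrite EFinM; apply: lee_wpmul2r; first by rewrite lee_fin invr_ge0 ltW.
by apply: ereal_sup_ubound; exists p.
Qed.

Lemma wavg_subr_wregret_le_eps_inner w : (forall n, (n < N)%N -> Pol (pi n w)) ->
  ((\sum_(n < N) wt n / W * ft n w (pi n w) (pi n w))%:E
     - wregret Pol ft pi N wt w * (W^-1)%:E
   <= eps_inner Pol ft N (fun n => (wt n / W)%R) w)%E.
Proof.
move=> Ppi; apply: (@le_trans _ _ (ereal_inf
    [set (\sum_(n < N) wt n / W * ft n w (pi n w) p)%:E | p in Pol])).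
  apply: le_ereal_inf_tmp => _ [p Pp <-].
  apply: le_trans (leeB (lexx _) (wavg_subr_le_wregret w Pp)) _.
  by rewrite -EFinB opprB addrC subrK.
by apply: ereal_sup_ubound; exists (fun n => pi n w).
Qed.

Variables (P : probability Omega R) (eps : R) (q : Omega -> V).
Hypotheses (Ppi : forall n w, (n < N)%N -> Pol (pi n w)) (Pq : forall w, Pol (q w)).

(* The regret is bounded below by the integrable comparison with the policy
   q, hence integrable as soon as its expectation is finite. *)
Lemma integral_wavg_le_eps_add_wregret :
  (forall n, (n < N)%N -> P.-integrable setT (fun w => (ft n w (pi n w) (pi n w))%:E)) ->
  (forall n, (n < N)%N -> P.-integrable setT (fun w => (ft n w (pi n w) (q w))%:E)) ->
  measurable_fun setT (wregret Pol ft pi N wt) ->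
  measurable_fun setT (eps_inner Pol ft N (fun n => wt n / W)) ->
  (\int[P]_w eps_inner Pol ft N (fun n => (wt n / W)%R) w <= eps%:E)%E ->
  (\int[P]_w (\sum_(n < N) wt n / W * ft n w (pi n w) (pi n w))%:E
     <= eps%:E + \int[P]_w (wregret Pol ft pi N wt w * (W^-1)%:E))%E.
Proof.
move=> i_est i_q m_reg m_eps int_eps.
have i_wavg := integrable_wsum (fun n => wt n / W) i_est.
have i_low := integrableB measurableT i_wavg (integrable_wsum (fun n => wt n / W) i_q).
apply: (integral_le_add_of_subr_le i_wavg i_low) int_eps => //.
- exact: emeasurable_funM m_reg (measurable_cst _).
- by move=> w; rewrite /= -EFinB; apply: wavg_subr_le_wregret.
- by move=> w; apply: wavg_subr_wregret_le_eps_inner => n; exact: Ppi.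
Qed.

End regret_decomposition.

Lemma Gmeas_eR_measurable d (Omega : measurableType d) (R : realType)
    (F : set (set Omega)) (f : Omega -> \bar R) :
  (forall A, F A -> measurable A) -> Gmeas_eR F f -> measurable_fun setT f.
Proof. by move=> Fm fF _ B mB; rewrite setTI; exact/Fm/fF. Qed.

Lemma integral_cost_le_estimate (R : realType) (V : normedModType R) (Pol : set V)
    (J : V -> R) (Jstar Cstar : R) dS (S : measurableType dS)
    (dist : V -> probability S R) (Dfun : V -> S -> R)
    dO (Omega : measurableType dO) (P : probability Omega R)
    (F : set (set Omega)) (rho : Omega -> V) (X : Omega -> \bar R) :
  0 <= Cstar -> (forall p, Pol p -> forall x, 0 <= Dfun p x) ->
  (forall p, Pol p -> ((J p - Jstar)%:E <= Cstar%:E * Fcost dist Dfun p p)%E) ->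
  sigma_algebra setT F -> (forall A, F A -> measurable A) ->
  (forall w, Pol (rho w)) -> P.-integrable setT (fun w => (J (rho w))%:E) ->
  is_cond_exp P F X (fun w => Fcost dist Dfun (rho w) (rho w)) ->
  (\int[P]_w (J (rho w))%:E <= Jstar%:E + Cstar%:E * \int[P]_w X w)%E.
Proof.
move=> C_ge0 D_ge0 perf Fsigma Fmeas Prho iJ [mY EY].
have [FT _ _] := sigma_algebra_dynkin Fsigma.
rewrite EY //; apply: probability_integral_le_affine => //.
- exact: Gmeas_eR_measurable Fmeas mY.
- by move=> w; apply: integral_ge0 => x _; rewrite lee_fin D_ge0.
- by move=> w; exact: perf.
Qed.

Theorem lemma1
  (R : realType) (V : normedModType R) (Pol : set V)
  (HPcompact : compact Pol) (HPconvex : convex_subset Pol)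
  (* costs, state-time distributions, divergence *)
  (J : V -> R) (Jstar : R) (Cstar : R) (HC : 0 <= Cstar)
  (dS : measure_display) (S : measurableType dS)
  (dist : V -> probability S R) (Dfun : V -> S -> R)
  (HD0 : forall p, Pol p -> forall x, 0 <= Dfun p x)
  (HDm : forall p, Pol p -> measurable_fun setT (Dfun p))
  (Hperf : forall p, Pol p ->
     ((J p - Jstar)%:E <= Cstar%:E * Fcost dist Dfun p p)%E)
  (* probability space and information structure *)
  (dO : measure_display) (Omega : measurableType dO) (P : probability Omega R)
  (G : nat -> set (set Omega)) (HG : is_filtration G)
  (* number of rounds, learner's policies, sampled estimates *)
  (N : nat) (HN : (0 < N)%N)
  (pi : nat -> Omega -> V)
  (HpiP : forall n w, (n < N)%N -> Pol (pi n w))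
  (Hpimeas : forall n, (n < N)%N -> Gmeas_V (G n) (pi n))
  (ft : nat -> Omega -> V -> V -> R)
  (Hftmeas : forall n p' p, Gmeas_R (G n.+1) (fun w => ft n w p' p))
  (Hunbiased : forall n, (n < N)%N ->
     forall rho : Omega -> V, Gmeas_V (G n) rho -> (forall w, Pol (rho w)) ->
       P.-integrable setT (fun w => (ft n w (pi n w) (rho w))%:E) /\
       is_cond_exp P (G n) (fun w => (ft n w (pi n w) (rho w))%:E)
                           (fun w => Fcost dist Dfun (pi n w) (rho w)))
  (* the constant epsilon_Pi^w *)
  (eps : R)
  (Heps : forall (M : nat) (theta : nat -> R),
     (forall n, (n < M)%N -> 0 < theta n) -> \sum_(n < M) theta n = 1 ->
     measurable_fun setT (eps_inner Pol ft M theta) /\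
     (\int[P]_w eps_inner Pol ft M theta w <= eps%:E)%E)
  (* weights *)
  (wt : nat -> R) (Hwt : forall n, (n < N)%N -> 0 < wt n)
  (* the expectations in the statement are well defined *)
  (HJint : forall n, (n < N)%N -> P.-integrable setT (fun w => (J (pi n w))%:E))
  (Hregm : measurable_fun setT (wregret Pol ft pi N wt)) :
  let W := \sum_(n < N) wt n in
  (\int[P]_w (\sum_(n < N) wt n * J (pi n w) / W)%:E
   <= Jstar%:E + Cstar%:E *
        (eps%:E + \int[P]_w (wregret Pol ft pi N wt w * (W^-1)%:E)))%E.
Proof.
cbv zeta; set W := \sum_(n < N) wt n; have [Gsigma Gmeas Ginc] := HG.
have W_gt0 : 0 < W by exact: sumr_ord_gt0.
pose th n := wt n / W.
have th_gt0 n : (n < N)%N -> 0 < th n by move=> lt_nN; rewrite divr_gt0 ?Hwt.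
have th_sum1 : \sum_(n < N) th n = 1 by rewrite -mulr_suml divff ?gt_eqF.
have unbiased_pi n (lt_nN : (n < N)%N) :=
  Hunbiased n lt_nN (pi n) (Hpimeas n lt_nN) (HpiP n ^~ lt_nN).
pose est n w := ft n w (pi n w) (pi n w).
have i_est n (lt_nN : (n < N)%N) : P.-integrable setT (EFin \o est n).
  by case: (unbiased_pi n lt_nN).
have round n : (n < N)%N -> fine (\int[P]_w (J (pi n w))%:E) <=
    Jstar + Cstar * fine (\int[P]_w (est n w)%:E).
  move=> lt_nN; have [_ ce] := unbiased_pi n lt_nN.
  rewrite -lee_fin EFinD EFinM !fineK ?integrable_fin_num ?i_est ?HJint //.
  exact: integral_cost_le_estimate HC HD0 Hperf (Gsigma n) (Gmeas n)
    (HpiP n ^~ lt_nN) (HJint n lt_nN) ce.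
apply: (@le_trans _ _ (Jstar%:E + Cstar%:E * \int[P]_w (\sum_(n < N) th n * est n w)%:E)%E).
  under eq_integral do under eq_bigr do rewrite mulrAC -/(th _).
  rewrite (integral_wsum th HJint) (integral_wsum th i_est) lee_fin.
  by apply: (wavg_le_affine _ th_sum1 round) => n /th_gt0/ltW.
rewrite leeD2l // lee_wpmul2l ?lee_fin //.
have [m_eps int_eps] := Heps N th th_gt0 th_sum1.
apply: (integral_wavg_le_eps_add_wregret W_gt0 HpiP (HpiP 0 ^~ HN)) => // n lt_nN.
have pi0_Gn : Gmeas_V (G n) (pi 0).
  by move=> U oU; apply: Ginc (leq0n n) _ (Hpimeas 0 HN U oU).
by case: (Hunbiased n lt_nN (pi 0) pi0_Gn (HpiP 0 ^~ HN)).
Qed.
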